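(* Let $X$ be a prelength space. Then $\mathrm{join}\circ\mathrm{map}(\mathrm{join})\asymp\mathrm{join}\circ\mathrm{join}$ as functions $\mathfrak{C}(\mathfrak{C}(\mathfrak{C}(X)))\to\mathfrak{C}(X)$, where $\mathrm{join}:\mathfrak{C}(\mathfrak{C}(X))\to\mathfrak{C}(X)$ is regarded as uniformly continuous with modulus $\lambda\varepsilon.\varepsilon$.
   Context: $\mathbb{Q}^+$ denotes the strictly positive rationals; all $\varepsilon,\delta$ (with indices) range over $\mathbb{Q}^+$. A metric space is a triple $(X,\asymp,B)$ where $\asymp$ is an equivalence relation on $X$ and $B$ assigns to each $\varepsilon\in\mathbb{Q}^+$ a binary relation $B_\varepsilon$ on $X$ respecting $\asymp$, such that: (1) each $B_\varepsilon$ is reflexive; (2) each $B_\varepsilon$ is symmetric; (3) if $B_{\varepsilon_1}(a,b)$ and $B_{\varepsilon_2}(b,c)$ then $B_{\varepsilon_1+\varepsilon_2}(a,c)$; (4) if $B_{\varepsilon+\delta}(a,b)$ for all $\delta$, then $B_\varepsilon(a,b)$; (5) if $B_\varepsilon(a,b)$ for all $\varepsilon$, then $a\asymp b$. A prelength space is a metric space such that for all $a,b,\varepsilon,\delta_1,\delta_2$ with $\varepsilon<\delta_1+\delta_2$ and $B_\varepsilon(a,b)$ there exists $c$ with $B_{\delta_1}(a,c)$ and $B_{\delta_2}(c,b)$. A regular function over $X$ is a function $x:\mathbb{Q}^+\to X$ such that $B_{\varepsilon_1+\varepsilon_2}(x(\varepsilon_1),x(\varepsilon_2))$ for all $\varepsilon_1,\varepsilon_2$.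 $\mathfrak{C}(X)$ is the metric space of regular functions over $X$ with $x\asymp y$ iff $B_{2\varepsilon}(x(\varepsilon),y(\varepsilon))$ for all $\varepsilon$ and $B'_\varepsilon(x,y)$ iff $B_{\varepsilon+\delta_1+\delta_2}(x(\delta_1),y(\delta_2))$ for all $\delta_1,\delta_2$; iterated completions are formed by repeating the construction. For any metric space $W$ and $x\in\mathfrak{C}(\mathfrak{C}(W))$, $\mathrm{join}(x)=\lambda\varepsilon.\,x(\tfrac{\varepsilon}{2})(\tfrac{\varepsilon}{2})$. For $f$ uniformly continuous with modulus $\mu_f$ (i.e. $B_{\mu_f(\varepsilon)}(x_1,x_2)$ implies $B_\varepsilon(f(x_1),f(x_2))$), $\mathrm{map}(f)(x)=\lambda\varepsilon.\,f(x(\mu_f(\varepsilon)))$. Two functions $h,k$ into a metric space satisfy $h\asymp k$ iff $h(a)\asymp k(a)$ for all $a$. *)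

(* rationals are mathcomp's [rat] (canonical representatives,
   so Leibniz equality on Q+ is the mathematical equality). *)
From mathcomp Require Import all_boot all_order all_algebra.
Set Implicit Arguments. Unset Strict Implicit. Unset Printing Implicit Defensive.
Import Order.TTheory GRing.Theory Num.Theory.
Local Open Scope ring_scope.

Definition qpos := {q : rat | 0 < q}.

Definition qp_add (a b : qpos) : qpos :=
  exist _ (sval a + sval b) (addr_gt0 (svalP a) (svalP b)).

Lemma qp_half_pos (a : qpos) : 0 < sval a / 2.
Proof. by rewrite divr_gt0 // (svalP a). Qed.

Definition qp_half (a : qpos) : qpos := exist _ (sval a / 2) (qp_half_pos a).

Record mspace := MSpace {
  mcar :> Type;
  meq : mcar -> mcar -> Prop;
  mball : qpos -> mcar -> mcar -> Prop }.

Definition is_metric (X : mspace) : Prop :=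
  (forall a : X, meq a a) /\
  (forall a b : X, meq a b -> meq b a) /\
  (forall a b c : X, meq a b -> meq b c -> meq a c) /\
  (forall e (a a' b b' : X), meq a a' -> meq b b' -> mball e a b -> mball e a' b') /\
  (forall e (a : X), mball e a a) /\
  (forall e (a b : X), mball e a b -> mball e b a) /\
  (forall e1 e2 (a b c : X), mball e1 a b -> mball e2 b c -> mball (qp_add e1 e2) a c) /\
  (forall e (a b : X), (forall d, mball (qp_add e d) a b) -> mball e a b) /\
  (forall a b : X, (forall e, mball e a b) -> meq a b).

Definition is_prelength (X : mspace) : Prop :=
  is_metric X /\
  forall (a b : X) (e d1 d2 : qpos), sval e < sval d1 + sval d2 -> mball e a b ->
    exists c : X, mball d1 a c /\ mball d2 c b.

(** For iterated completions we work with spaces whose points are given by a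
    carrier together with a membership predicate (the points of the space are
    the members). *)
Record space := Space {
  pt :> Type;
  mem : pt -> Prop;
  seqv : pt -> pt -> Prop;
  sball : qpos -> pt -> pt -> Prop }.

Definition of_mspace (X : mspace) : space :=
  @Space (mcar X) (fun _ => True) (@meq X) (@mball X).

Definition regular (W : space) (x : qpos -> W) : Prop :=
  forall e1 e2, sball (qp_add e1 e2) (x e1) (x e2).

Definition compl (W : space) : space :=
  @Space (qpos -> W)
    (fun x => (forall e, mem (x e)) /\ regular x)
    (fun x y => forall e, sball (qp_add e e) (x e) (y e))
    (fun e x y => forall d1 d2, sball (qp_add (qp_add e d1) d2) (x d1) (y d2)).

Definition cjoin (W : space) (x : compl (compl W)) : compl W :=
  fun e => x (qp_half e) (qp_half e).

Definition cmap (A B : space) (f : A -> B) (mu : qpos -> qpos) (x : compl A) : compl B :=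
  fun e => f (x (mu e)).

Definition fun_eqv (A B : space) (h k : A -> B) : Prop :=
  forall a : A, mem a -> seqv (h a) (k a).

From mathcomp Require Import all_boot all_order all_algebra.
From mathcomp Require Import ring.
Import Order.TTheory GRing.Theory Num.Theory.
Local Open Scope ring_scope.

(* At precision e, with q = e/4, join (map join x) evaluates to x (e/2) q q and
   join (join x) to x q q (e/2).  Regularity of x, unfolded through the three
   completions, puts these within e/2 + q + q + q + q + e/2 = 2e of each other,
   which is exactly the equivalence of the completion.  No metric axiom is
   needed. *)

Lemma sball_eq_radius (W : space) (e e' : qpos) (a b : W) :
  sval e = sval e' -> sball e a b -> sball e' a b.
Proof. by move=> /val_inj ->. Qed.

Lemma cjoin_assoc (W : space) :
  @fun_eqv (compl (compl (compl W))) (compl W)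
    (fun x => cjoin (cmap (@cjoin W) (fun e => e) x))
    (fun x => cjoin (cjoin x)).
Proof.
move=> x [_ x_reg] e; set q := qp_half (qp_half e).
apply: sball_eq_radius (x_reg (qp_half e) q q q q (qp_half e)).
by rewrite /=; field.
Qed.

Theorem theorem22 (X : mspace) (HX : is_prelength X) :
  @fun_eqv (compl (compl (compl (of_mspace X)))) (compl (of_mspace X))
    (fun x => cjoin (cmap (@cjoin (of_mspace X)) (fun e => e) x))
    (fun x => cjoin (cjoin x)).
Proof. exact: cjoin_assoc. Qed.
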